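(* Let $\mathcal M=(S,L,\tau,\ell)$ be an LMC (possibly with infinitely many states) and $s,t\in S$ with $d(s,t)<1$. Then there exists a policy $T$ such that for every $\varepsilon>0$ there is $(u,v)\in S^2$ with $d(u,v)\le\varepsilon$ and $\mathcal R^T_{\mathcal M}((s,t),\{(u,v)\})>0$.
   Context: An LMC $\mathcal M=(S,L,\tau,\ell)$ has a nonempty countable state set $S$, finite label set $L$, finitely-branching transition function $\tau:S\to\mathrm{Distr}(S)$ and labelling $\ell$. The probabilistic bisimilarity distance $d$ is the least fixed point of $\Delta(e)(s,t)=1$ if $\ell(s)\ne\ell(t)$ and $\Delta(e)(s,t)=\min_{\omega\in\Omega(\tau(s),\tau(t))}\sum_{u,v}\omega(u,v)e(u,v)$ otherwise, where $\Omega(\mu,\nu)$ is the set of couplings (distributions on $S\times S$ with marginals $\mu,\nu$). Probabilistic bisimilarity $\sim$ is the largest equivalence $R$ on $S$ such that $(s,t)\in R$ implies $\ell(s)=\ell(t)$ and $\tau(s)(E)=\tau(t)(E)$ for every $R$-class $E$. Partition $S^2$ into $S^2_0=\{(s,t):s\sim t\}$, $S^2_1=\{(s,t):\ell(s)\ne\ell(t)\}$, $S^2_?=S^2\setminus(S^2_0\cup S^2_1)$. A policy is a map $T:S^2_?\to\mathrm{Distr}(S^2)$ with $T(s,t)\in\Omega(\tau(s),\tau(t))$. The Markov chain $\mathcal C^T_{\mathcal M}$ on $S^2$ has every pair in $S^2_0\cup S^2_1$ absorbing and from $(u,v)\in S^2_?$ moves to $(x,y)$ with probability $T(u,v)(x,y)$.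 $\mathcal R^T_{\mathcal M}((s,t),Z)$ is the probability that $\mathcal C^T_{\mathcal M}$ started in $(s,t)$ reaches $Z\subseteq S^2$. *)

From HB Require Import structures.
From mathcomp Require Import all_boot all_order all_algebra.
From mathcomp Require Import boolp classical_sets reals.
Set Implicit Arguments. Unset Strict Implicit. Unset Printing Implicit Defensive.
Import Order.TTheory GRing.Theory Num.Theory.
Local Open Scope ring_scope.
Local Open Scope classical_set_scope.

Section LMC.
Variables (R : realType) (S : countType) (L : finType).

(* A finitely-branching LMC: tau s is a probability distribution on S whose
   support is contained in the finite duplicate-free list supp s. *)
Definition is_lmc (tau : S -> S -> R) (supp : S -> seq S) : Prop :=
  forall s, [/\ uniq (supp s),
               (forall x, 0 <= tau s x),
               (forall x, tau s x != 0 -> x \in supp s) &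
               \sum_(x <- supp s) tau s x = 1].

(* Omega(mu, nu): couplings of mu (finite support list smu) and nu (list snu).
   Any coupling of finitely supported distributions is supported in
   smu x snu, so this requirement loses nothing. *)
Definition coupling (mu : S -> R) (smu : seq S) (nu : S -> R) (snu : seq S)
    (om : S * S -> R) : Prop :=
  [/\ (forall p, 0 <= om p),
      (forall p, om p != 0 -> (p.1 \in smu) && (p.2 \in snu)),
      (forall u, \sum_(v <- snu) om (u, v) = mu u) &
      (forall v, \sum_(u <- smu) om (u, v) = nu v)].

Definition cexp (smu snu : seq S) (om : S * S -> R) (e : S * S -> R) : R :=
  \sum_(u <- smu) \sum_(v <- snu) om (u, v) * e (u, v).

Variables (tau : S -> S -> R) (supp : S -> seq S) (lab : S -> L).

(* e is a fixed point of Delta (the min is spelled out: attained and a lower bound) *)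
Definition Delta_fixpoint (e : S * S -> R) : Prop :=
  forall s t,
    (lab s != lab t -> e (s, t) = 1) /\
    (lab s = lab t ->
      (exists om, coupling (tau s) (supp s) (tau t) (supp t) om /\
                  e (s, t) = cexp (supp s) (supp t) om e) /\
      (forall om, coupling (tau s) (supp s) (tau t) (supp t) om ->
                  e (s, t) <= cexp (supp s) (supp t) om e)).

Definition unit_valued (e : S * S -> R) : Prop := forall p, 0 <= e p <= 1.

Definition is_bisim_distance (d : S * S -> R) : Prop :=
  [/\ unit_valued d, Delta_fixpoint d &
      forall e, unit_valued e -> Delta_fixpoint e -> forall p, d p <= e p].

Definition prob_bisim (Rel : S -> S -> Prop) : Prop :=
  [/\ (forall x, Rel x x), (forall x y, Rel x y -> Rel y x),
      (forall x y z, Rel x y -> Rel y z -> Rel x z) &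
      forall s t, Rel s t ->
        lab s = lab t /\
        forall y, \sum_(x <- supp s | `[< Rel x y >]) tau s x =
                  \sum_(x <- supp t | `[< Rel x y >]) tau t x].

Definition bisimilar (s t : S) : Prop := exists Rel, prob_bisim Rel /\ Rel s t.

Definition S2q (p : S * S) : Prop := ~ bisimilar p.1 p.2 /\ lab p.1 = lab p.2.

Definition policy (T : S * S -> S * S -> R) : Prop :=
  forall p, S2q p -> coupling (tau p.1) (supp p.1) (tau p.2) (supp p.2) (T p).

Fixpoint reach_n (T : S * S -> S * S -> R) (Z : set (S * S)) (n : nat)
    (p : S * S) : R :=
  if `[< Z p >] then 1 else
  match n with
  | 0 => 0
  | n'.+1 =>
      if `[< S2q p >] then
        \sum_(u <- supp p.1) \sum_(v <- supp p.2) T p (u, v) * reach_n T Z n' (u, v)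
      else 0
  end.

Definition reach_prob (T : S * S -> S * S -> R) (Z : set (S * S)) (p : S * S) : R :=
  sup [set reach_n T Z n p | n in [set: nat]].

End LMC.

(* Let T choose at every pair a coupling attaining the minimum in Delta(d).  If
   every pair reachable from (s, t) under T had distance > eps, the reachable set
   Z would contain no bisimilar pair (those are at distance 0), hence be closed
   under the steps of T, and lowering d to (d - eps) / (1 - eps) on Z would give a
   prefixpoint of Delta.  The least fixpoint d lies below every prefixpoint
   (Knaster-Tarski; the minimum over couplings is attained by compactness), so
   d <= (d - eps) / (1 - eps) on Z, i.e. d = 1 on Z, contradicting d(s, t) < 1. *)

From mathcomp Require Import all_boot all_order all_algebra.
From mathcomp Require Import boolp classical_sets reals topology normedtype.
From mathcomp Require Import matrix_normedtype derive.
From mathcomp Require Import ring lra.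
Import Order.TTheory GRing.Theory Num.Theory.
Import numFieldTopology.Exports numFieldNormedType.Exports.
Local Open Scope ring_scope.
Local Open Scope classical_set_scope.
Set Implicit Arguments. Unset Strict Implicit. Unset Printing Implicit Defensive.

Lemma ler_sum_term (R : numDomainType) (I : eqType) (r : seq I) (F : I -> R) x :
  (forall y, 0 <= F y) -> x \in r -> F x <= \sum_(y <- r) F y.
Proof.
move=> F0; elim: r => [//|y r IHr]; rewrite inE big_cons => /orP[/eqP->|xr].
  by rewrite lerDl sumr_ge0.
by rewrite (le_trans (IHr xr)) // lerDr.
Qed.

Lemma psumr_gt0P (R : numDomainType) (I : eqType) (r : seq I) (F : I -> R) :
  (forall i, 0 <= F i) -> 0 < \sum_(i <- r) F i -> exists2 i, i \in r & 0 < F i.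
Proof. by move=> F0; rewrite lt0r psumr_neq0 // => /andP[/hasP[i ir /= Fi] _]; exists i. Qed.

Lemma divfK_eq0 (F : fieldType) (x y : F) : (y = 0 -> x = 0) -> x / y * y = x.
Proof.
move=> y0x; have [y0|y0] := eqVneq y 0; last exact: divfK.
by rewrite (y0x y0) !mul0r.
Qed.

Lemma continuous_sum (R : realType) (T : topologicalType) (I : Type) (r : seq I)
    (F : I -> T -> R) :
  (forall i, continuous (F i)) -> continuous (fun x => \sum_(i <- r) F i x).
Proof. by move=> Fc; apply: continuous_big => [|i _]; [exact: add_continuous|exact: Fc]. Qed.

Section CouplingCompactness.
Variables (R : realType) (S : countType) (mu nu : S -> R) (a b : seq S).

Let P := [seq (u, v) | u <- a, v <- b].
Let k := size P.

Let mem_P p : (p \in P) = (p.1 \in a) && (p.2 \in b).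
Proof.
case: p => u v /=; apply/allpairsP/andP => [[[u' v'] [/= ? ? [-> ->]]] //|[ua vb]].
by exists (u, v).
Qed.

Definition coupling_of_row (x : 'rV[R]_k) (p : S * S) : R :=
  if insub (index p P) is Some i then x ord0 i else 0.

Definition row_of_coupling (om : S * S -> R) : 'rV[R]_k :=
  \row_i om (tnth (in_tuple P) i).

Lemma coupling_of_row_out x p : p \notin P -> coupling_of_row x p = 0.
Proof. by move=> pP; rewrite /coupling_of_row insubN // index_mem. Qed.

Lemma row_of_couplingK om : coupling mu a nu b om ->
  coupling_of_row (row_of_coupling om) =1 om.
Proof.
move=> [_ omP' _ _] p.
have omP q : om q != 0 -> q \in P by rewrite mem_P; exact: omP'.
have [pP|pP] := boolP (p \in P).
  by rewrite /coupling_of_row insubT ?index_mem // => ?; rewrite mxE (tnth_nth p) nth_index.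
by rewrite coupling_of_row_out //; apply/esym/eqP; exact: contraNT (omP p) pP.
Qed.

Lemma continuous_coupling_of_row p : continuous (coupling_of_row^~ p).
Proof.
rewrite /coupling_of_row; case: insub => [i|]; first exact: coord_continuous.
exact: cst_continuous.
Qed.

(* The redundant bound [x_i <= mu u] at the coordinate [i] of [(u, v)] makes
   the set compact. *)
Let couplings_row : set 'rV[R]_k :=
  [set x : 'rV[R]_k | forall i, `[0, mu (tnth (in_tuple P) i).1] (x ord0 i)] `&`
  (\bigcap_u [set x | \sum_(v <- b) coupling_of_row x (u, v) = mu u] `&`
   \bigcap_v [set x | \sum_(u <- a) coupling_of_row x (u, v) = nu v]).

Let compact_couplings_row : compact couplings_row.
Proof.
have closed_eq_fun (F : 'rV[R]_k -> R) c : continuous F -> closed [set x | F x = c].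
  move=> Fc; have := @preimage_closed _ _ F [set y | y = c].
  by apply=> [y _|]; [exact: Fc|exact: closed_eq].
apply: compact_closedI.
  apply: (@rV_compact _ k (fun i => `[0, mu (tnth (in_tuple P) i).1])) => i.
  exact: segment_compact.
apply: closedI; apply: closed_bigI => w _; apply: closed_eq_fun.
  by apply: continuous_sum => v; exact: continuous_coupling_of_row.
by apply: continuous_sum => u; exact: continuous_coupling_of_row.
Qed.

Let coupling_of_row_coupling x : couplings_row x -> coupling mu a nu b (coupling_of_row x).
Proof.
move=> [box [m1 m2]]; split=> [p|p|u|v]; [ | | exact: m1 | exact: m2].
- rewrite /coupling_of_row; case: insub => [i|//].
  by have := box i; rewrite /= in_itv /= => /andP[].
- by apply: contraR => /negbTE pP; rewrite coupling_of_row_out // mem_P pP.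
Qed.

Let row_of_coupling_couplings om : coupling mu a nu b om -> couplings_row (row_of_coupling om).
Proof.
move=> omC; have omK := row_of_couplingK omC; have [om0 _ om1 om2] := omC.
split; last by split=> w _ /=; under eq_bigr do rewrite omK; [exact: om1|exact: om2].
move=> i; rewrite /= mxE in_itv /= om0 /=.
have : tnth (in_tuple P) i \in P by rewrite mem_tnth.
case: (tnth _ _) => u v; rewrite mem_P /= => /andP[_ vb].
by rewrite -om1; apply: (ler_sum_term (F := fun v' => om (u, v'))).
Qed.

Lemma coupling_min_attained (c : S * S -> R) :
  (exists om, coupling mu a nu b om) ->
  exists om, coupling mu a nu b om /\
    forall om', coupling mu a nu b om' -> cexp a b om c <= cexp a b om' c.
Proof.
move=> [om0 om0C].
have ne : couplings_row !=set0 by exists (row_of_coupling om0); exact: row_of_coupling_couplings.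
have cexp_cont : continuous (fun x => cexp a b (coupling_of_row x) c).
  apply: continuous_sum => u; apply: continuous_sum => v x.
  by apply: continuousM; [exact: continuous_coupling_of_row|exact: cst_continuous].
have [x xK xmin] := compact_EVT_min ne compact_couplings_row (continuous_subspaceT cexp_cont).
exists (coupling_of_row x); split; first by apply: coupling_of_row_coupling; rewrite inE in xK.
move=> om omC.
have -> : cexp a b om c = cexp a b (coupling_of_row (row_of_coupling om)) c.
  by apply: eq_bigr => u _; apply: eq_bigr => v _; rewrite row_of_couplingK.
by apply: xmin; rewrite inE; exact: row_of_coupling_couplings.
Qed.

End CouplingCompactness.

Section CouplingExpectation.
Variables (R : realType) (S : countType) (mu nu : S -> R) (a b : seq S).
Variables (om : S * S -> R).
Hypothesis omC : coupling mu a nu b om.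

Lemma coupling_mass : \sum_(u <- a) \sum_(v <- b) om (u, v) = \sum_(u <- a) mu u.
Proof. by have [_ _ om1 _] := omC; apply: eq_bigr => u _; exact: om1. Qed.

Lemma ler_cexp e e' : (forall q, om q != 0 -> e q <= e' q) ->
  cexp a b om e <= cexp a b om e'.
Proof.
have [om0 _ _ _] := omC; move=> ee'.
apply: ler_sum => u _; apply: ler_sum => v _.
by have [->|/ee' le] := eqVneq (om (u, v)) 0; rewrite ?mul0r // ler_wpM2l.
Qed.

Lemma cexp_ge0 e : (forall q, 0 <= e q) -> 0 <= cexp a b om e.
Proof.
have [om0 _ _ _] := omC; move=> e0.
by apply: sumr_ge0 => u _; apply: sumr_ge0 => v _; rewrite mulr_ge0.
Qed.

Lemma cexp_affine (al be : R) e : \sum_(u <- a) mu u = 1 ->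
  cexp a b om (fun q => al * e q + be) = al * cexp a b om e + be.
Proof.
move=> mu1; transitivity (\sum_(u <- a) (al * \sum_(v <- b) om (u, v) * e (u, v)
                             + be * \sum_(v <- b) om (u, v))).
  apply: eq_bigr => u _; rewrite !big_distrr -big_split /=.
  by apply: eq_bigr => v _; ring.
by rewrite big_split /= -!big_distrr /= coupling_mass mu1 mulr1.
Qed.

End CouplingExpectation.

Section LMCDistance.
Variables (R : realType) (S : countType) (L : finType).
Variables (tau : S -> S -> R) (supp : S -> seq S) (lab : S -> L).
Hypothesis HM : is_lmc tau supp.

Local Notation cp p om := (coupling (tau p.1) (supp p.1) (tau p.2) (supp p.2) om).
Local Notation ce p om e := (cexp (supp p.1) (supp p.2) om e).
Local Notation bisimilar := (bisimilar tau supp lab).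

Lemma lmc_mass s : \sum_(x <- supp s) tau s x = 1.
Proof. by have [] := HM s. Qed.

Lemma product_coupling p : cp p (fun q => tau p.1 q.1 * tau p.2 q.2).
Proof.
have [_ t1 s1 _] := HM p.1; have [_ t2 s2 _] := HM p.2.
split=> [q|[u v]|u|v] /=; first by rewrite mulr_ge0.
- by rewrite mulf_eq0 negb_or => /andP[/s1 -> /s2 ->].
- by rewrite -big_distrr /= lmc_mass mulr1.
- by rewrite -big_distrl /= lmc_mass mul1r.
Qed.

Let optimal_coupling_ex p e :
  exists om, cp p om /\ forall om', cp p om' -> ce p om e <= ce p om' e.
Proof.
apply: coupling_min_attained.
by exists (fun q => tau p.1 q.1 * tau p.2 q.2); exact: product_coupling.
Qed.

Definition optimal_coupling p e := projT1 (cid (optimal_coupling_ex p e)).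

Lemma optimal_couplingP p e : cp p (optimal_coupling p e) /\
  forall om, cp p om -> ce p (optimal_coupling p e) e <= ce p om e.
Proof. exact: projT2 (cid (optimal_coupling_ex p e)). Qed.

Definition Delta (e : S * S -> R) p : R :=
  if lab p.1 == lab p.2 then ce p (optimal_coupling p e) e else 1.

Lemma Delta_lab_neq e p : lab p.1 != lab p.2 -> Delta e p = 1.
Proof. by rewrite /Delta => /negPf ->. Qed.

Lemma Delta_le_cexp e p om : lab p.1 = lab p.2 -> cp p om -> Delta e p <= ce p om e.
Proof. by rewrite /Delta => -> omC; rewrite eqxx; exact: (optimal_couplingP p e).2. Qed.

Lemma Delta_ge0 e p : (forall q, 0 <= e q) -> 0 <= Delta e p.
Proof.
rewrite /Delta; case: eqP => // _ e0.
by apply: cexp_ge0 => //; exact: (optimal_couplingP p e).1.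
Qed.

Lemma le_Delta e e' : (forall q, e q <= e' q) -> forall p, Delta e p <= Delta e' p.
Proof.
move=> ee' p; rewrite {2}/Delta; case: eqP => [hl|/eqP hl]; last by rewrite Delta_lab_neq.
have omC := (optimal_couplingP p e').1.
exact: le_trans (Delta_le_cexp e hl omC) (ler_cexp omC (fun q _ => ee' q)).
Qed.

Lemma Delta_fixpointE e : Delta_fixpoint tau supp lab e -> forall p, Delta e p = e p.
Proof.
move=> efix [s t]; have [e1 e2] := efix s t.
have [hl|hl] := eqVneq (lab s) (lab t); last by rewrite Delta_lab_neq // e1.
apply/le_anti/andP; split; first by have [[om [omC ->]] _] := e2 hl; exact: Delta_le_cexp.
by rewrite /Delta /= hl eqxx; apply: (e2 hl).2; exact: (optimal_couplingP _ e).1.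
Qed.

Lemma eq_Delta_fixpoint e : (forall p, Delta e p = e p) -> Delta_fixpoint tau supp lab e.
Proof.
move=> eE s t; split=> [hl|hl]; first by rewrite -eE Delta_lab_neq.
split=> [|om omC]; last by rewrite -eE; exact: Delta_le_cexp.
exists (optimal_coupling (s, t) e); split; first exact: (optimal_couplingP _ e).1.
by rewrite -eE /Delta /= hl eqxx.
Qed.

Definition Delta_prefixpoint (e : S * S -> R) : Prop :=
  unit_valued e /\ forall p, Delta e p <= e p.

(* Knaster-Tarski: the pointwise infimum of all prefixpoints is a fixpoint. *)
Lemma bisim_distance_le_prefixpoint d e : is_bisim_distance tau supp lab d ->
  Delta_prefixpoint e -> forall p, d p <= e p.
Proof.
move=> [_ _ d_least] e_pre p.
pose lb q := inf [set x q | x in Delta_prefixpoint].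
have lb_le x q : Delta_prefixpoint x -> lb q <= x q.
  move=> x_pre; apply: ge_inf; last by exists x.
  by exists 0 => _ [y [y01 _] <-]; have /andP[] := y01 q.
have le_lb c q : (forall x, Delta_prefixpoint x -> c <= x q) -> c <= lb q.
  by move=> cx; apply: lb_le_inf => [|_ [x x_pre <-]]; [exists (e q), e|exact: cx].
have lb01 : unit_valued lb.
  move=> q; rewrite (le_lb 0) => [|x [x01 _]]; last by have /andP[] := x01 q.
  by rewrite (le_trans (lb_le e q e_pre)) //; have [/(_ q)/andP[]] := e_pre.
have Delta_lb q : Delta lb q <= lb q.
  apply: le_lb => x x_pre; apply: le_trans (x_pre.2 q).
  by apply: le_Delta => r; exact: lb_le.
have Delta_lb_pre : Delta_prefixpoint (Delta lb).
  split=> [q|q]; last by apply: le_Delta; exact: Delta_lb.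
  rewrite Delta_ge0 => [|r]; last by have /andP[] := lb01 r.
  by rewrite (le_trans (Delta_lb q)) //; have /andP[] := lb01 q.
have lbE q : Delta lb q = lb q by apply/le_anti; rewrite Delta_lb lb_le.
exact: le_trans (d_least lb lb01 (eq_Delta_fixpoint lbE) p) (lb_le e p e_pre).
Qed.


Lemma bisimilar_lab s t : bisimilar s t -> lab s = lab t.
Proof. by move=> [Rel [[_ _ _ RelP] st]]; have [] := RelP _ _ st. Qed.

Lemma bisimulation_coupling Rel s t : prob_bisim tau supp lab Rel -> Rel s t ->
  exists om, cp (s, t) om /\ forall q, om q != 0 -> Rel q.1 q.2.
Proof.
move=> [Rrefl Rsym Rtrans RelP] st.
have RsymE x y : `[< Rel x y >] = `[< Rel y x >] by apply: asbool_equiv_eq; split; exact: Rsym.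
pose mass x y := \sum_(z <- supp x | `[< Rel z y >]) tau x z.
have mass_Rel x y y' : Rel y y' -> mass x y = mass x y'.
  move=> yy'; apply: eq_bigl => z; apply: asbool_equiv_eq.
  by split=> zy; [exact: Rtrans zy yy'|exact: Rtrans zy (Rsym _ _ yy')].
have mass_eq0 x y : mass x y = 0 -> tau x y = 0.
  move=> m0; have [_ t0 tsupp _] := HM x.
  have [yx|yx] := boolP (y \in supp x); last by apply/eqP; exact: contraNT (tsupp y) yx.
  apply/le_anti; rewrite t0 andbT -m0 /mass big_mkcond /=.
  have := ler_sum_term (F := fun z => if `[< Rel z y >] then tau x z else 0) _ yx.
  by rewrite asboolT //; apply=> z; case: ifP.
have mass_st y : mass s y = mass t y by have [_] := RelP _ _ st; apply.
pose om q := if `[< Rel q.1 q.2 >] then tau s q.1 * tau t q.2 / mass s q.1 else 0.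
exists om; split=> [|[u v]]; last by rewrite /om /=; case: asboolP => // _; rewrite eqxx.
have [_ s0 ssupp _] := HM s; have [_ t0 tsupp _] := HM t.
split=> [[u v]|[u v]|u|v]; rewrite /om /=.
- by case: asboolP => // _; rewrite divr_ge0 ?mulr_ge0 ?sumr_ge0.
- case: asboolP => _; last by rewrite eqxx.
  by rewrite !mulf_eq0 !negb_or => /andP[/andP[/ssupp -> /tsupp ->]].
- transitivity (tau s u / mass s u * mass t u).
    rewrite /mass big_distrr [RHS]big_mkcond /=; apply: eq_bigr => v _.
    by rewrite RsymE; case: ifP; rewrite ?mulr0 // mulrAC.
  by rewrite -mass_st divfK_eq0 //; exact: mass_eq0.
- transitivity (tau t v / mass s v * mass s v).
    rewrite {3}/mass big_distrr [RHS]big_mkcond /=; apply: eq_bigr => u _.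
    by case: asboolP => [uv|]; rewrite ?mulr0 // (mass_Rel _ _ _ uv); ring.
  by rewrite divfK_eq0 // mass_st; exact: mass_eq0.
Qed.

Lemma bisimilar_coupling p : bisimilar p.1 p.2 ->
  exists om, cp p om /\ forall q, om q != 0 -> bisimilar q.1 q.2.
Proof.
case: p => s t [Rel [RelP st]]; have [om [omC omR]] := bisimulation_coupling RelP st.
by exists om; split=> // q /omR; exists Rel.
Qed.

Lemma bisim_distance_bisimilar d p : is_bisim_distance tau supp lab d ->
  bisimilar p.1 p.2 -> d p = 0.
Proof.
move=> dd bp; have [d01 dfix _] := dd.
pose e q := if `[< bisimilar q.1 q.2 >] then 0 else d q.
have e_le_d q : e q <= d q by rewrite /e; case: asboolP => // _; have /andP[] := d01 q.
have e_pre : Delta_prefixpoint e.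
  split=> q; first by rewrite /e; case: asboolP => // _; rewrite lexx ler01.
  have [bq|nbq] := pselect (bisimilar q.1 q.2); last first.
    rewrite {2}/e asboolF // -(Delta_fixpointE dfix q).
    exact: le_Delta e_le_d q.
  have [om [omC omb]] := bisimilar_coupling bq.
  apply: le_trans (Delta_le_cexp e (bisimilar_lab bq) omC) _.
  rewrite /e asboolT // /cexp big1 // => u _; rewrite big1 // => v _.
  by have [->|/omb b] := eqVneq (om (u, v)) 0; rewrite ?mul0r // asboolT // mulr0.
apply/le_anti; have /andP[-> _] := d01 p; rewrite andbT.
by have := bisim_distance_le_prefixpoint dd e_pre p; rewrite /e asboolT.
Qed.

Definition optimal_policy d : S * S -> S * S -> R := fun p => optimal_coupling p d.

Lemma optimal_policyP d p : Delta_fixpoint tau supp lab d -> lab p.1 = lab p.2 ->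
  cp p (optimal_policy d p) /\ d p = ce p (optimal_policy d p) d.
Proof.
move=> dfix hl; split; first exact: (optimal_couplingP p d).1.
by rewrite -(Delta_fixpointE dfix p) /Delta hl eqxx.
Qed.

Lemma bisim_distance_one_on_closed d (Z : set (S * S)) (eps : R) :
  is_bisim_distance tau supp lab d -> 0 < eps ->
  (forall p q, Z p -> S2q tau supp lab p -> optimal_policy d p q != 0 -> Z q) ->
  (forall p, Z p -> eps < d p) -> forall p, Z p -> d p = 1.
Proof.
move=> dd eps0 Zclosed Zfar p Zp; have [d01 dfix _] := dd.
have d1 q : d q <= 1 by have /andP[] := d01 q.
have eps1 : 0 < 1 - eps by rewrite subr_gt0 (lt_le_trans (Zfar _ Zp)).
pose ph x := (1 - eps)^-1 * x + - (eps / (1 - eps)).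
have phE x : ph x = (x - eps) / (1 - eps) by rewrite /ph mulrBl mulrC.
pose e q := if `[< Z q >] then ph (d q) else d q.
have e_le_d q : e q <= d q.
  rewrite /e phE; case: asboolP => // _; rewrite ler_pdivrMr //.
  by have := d1 q; nra.
have e_pre : Delta_prefixpoint e.
  split=> [q|[u v]].
    rewrite (le_trans (e_le_d q)) // andbT /e phE; case: asboolP => [Zq|_]; last first.
      by have /andP[] := d01 q.
    by rewrite divr_ge0 ?(ltW eps1) // subr_ge0 ltW // Zfar.
  have [hl|hl] := eqVneq (lab u) (lab v); last first.
    by rewrite Delta_lab_neq // /e (proj1 (dfix u v) hl) phE divff ?gt_eqF //; case: asboolP.
  have [TC Td] := optimal_policyP dfix (p := (u, v)) hl.
  apply: le_trans (Delta_le_cexp (p := (u, v)) e hl TC) _.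
  rewrite {2}/e; case: asboolP => Zuv; last first.
    by rewrite Td; apply: (ler_cexp TC) => q _; exact: e_le_d.
  have uv_S2q : S2q tau supp lab (u, v).
    split=> // buv; have := Zfar _ Zuv.
    by rewrite (bisim_distance_bisimilar dd buv) ltNge (ltW eps0).
  rewrite Td /ph -(cexp_affine TC _ _ _ (lmc_mass _)); apply: (ler_cexp TC) => q Tq.
  by rewrite /e asboolT //; exact: Zclosed Zuv uv_S2q Tq.
have := bisim_distance_le_prefixpoint dd e_pre p; rewrite /e asboolT // phE.
rewrite ler_pdivlMr // => dp; apply/le_anti; rewrite d1 /=.
by have := Zfar _ Zp; nra.
Qed.

Section Reachability.
Variable T : S * S -> S * S -> R.
Hypothesis TP : policy tau supp lab T.
Local Notation rn := (reach_n tau supp lab T).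

Lemma reach_n_ge0 Z n p : 0 <= rn Z n p.
Proof.
elim: n p => [|n IHn] p /=; case: asboolP => // _; rewrite ?ler01 //.
case: asboolP => // Sp; have [T0 _ _ _] := TP Sp.
by apply: sumr_ge0 => u _; apply: sumr_ge0 => v _; rewrite mulr_ge0.
Qed.

Lemma reach_n_le1 Z n p : rn Z n p <= 1.
Proof.
elim: n p => [|n IHn] p /=; case: asboolP => // _; rewrite ?ler01 //.
case: asboolP => [Sp|_]; last exact: ler01.
have TC := TP Sp; have [T0 _ _ _] := TC.
rewrite -(lmc_mass p.1) -(coupling_mass TC).
by apply: ler_sum => u _; apply: ler_sum => v _; rewrite ler_piMr.
Qed.

Lemma reach_n_succ_gt0P Z n p : 0 < rn Z n.+1 p <->
  Z p \/ (S2q tau supp lab p /\ exists2 q, T p q != 0 & 0 < rn Z n q).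
Proof.
rewrite /=; case: asboolP => [Zp|nZp]; first by split=> _; [left|exact: ltr01].
case: asboolP => [Sp|nSp]; last by rewrite ltxx; split=> // -[/nZp|[/nSp]].
have [T0 Tsupp _ _] := TP Sp.
have F0 q : 0 <= T p q * rn Z n q by rewrite mulr_ge0 ?reach_n_ge0.
split=> [pos|[/nZp//|[_ [[u v] Tuv pos]]]].
  right; split=> //.
  have [u _ posu] := psumr_gt0P (fun u => sumr_ge0 _ (fun v _ => F0 (u, v))) pos.
  have [v _ Fuv] := psumr_gt0P (fun v => F0 (u, v)) posu.
  exists (u, v); first by apply: contraTneq Fuv => ->; rewrite mul0r ltxx.
  by rewrite lt0r reach_n_ge0 andbT; apply: contraTneq Fuv => ->; rewrite mulr0 ltxx.
have /andP[up vp] := Tsupp _ Tuv.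
apply: lt_le_trans (ler_sum_term (fun u => sumr_ge0 _ (fun v _ => F0 (u, v))) up).
apply: lt_le_trans (ler_sum_term (fun v => F0 (u, v)) vp).
by rewrite mulr_gt0 // lt0r Tuv T0.
Qed.

Lemma reach_n_snoc p q : S2q tau supp lab p -> T p q != 0 ->
  forall n x, 0 < rn [set p] n x -> 0 < rn [set q] n.+1 x.
Proof.
move=> Sp Tpq; have rn_q m : 0 < rn [set q] m q by case: m => [|m] /=; rewrite asboolT ?ltr01.
have from_p m : 0 < rn [set q] m.+1 p.
  by apply/reach_n_succ_gt0P; right; split=> //; exists q.
elim=> [|n IHn] x.
  move=> pos; suff -> : x = p by [].
  by apply: contrapT => xp; move: pos; rewrite /= asboolF // ltxx.
move/reach_n_succ_gt0P => [->|[Sx [r Txr /IHn pos]]] //.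
by apply/reach_n_succ_gt0P; right; split=> //; exists r.
Qed.

Definition reachable p q := exists n, 0 < rn [set q] n p.

Lemma reachable_refl p : reachable p p.
Proof. by exists 0%N; rewrite /= asboolT ?ltr01. Qed.

Lemma reachable_step p x y : reachable p x -> S2q tau supp lab x -> T x y != 0 ->
  reachable p y.
Proof. by move=> [n pos] Sx Txy; exists n.+1; exact: reach_n_snoc pos. Qed.

Lemma reachable_reach_prob p q : reachable p q -> 0 < reach_prob tau supp lab T [set q] p.
Proof.
move=> [n pos]; apply: lt_le_trans pos _; apply: ub_le_sup; last by exists n.
by exists 1 => _ [m _ <-]; exact: reach_n_le1.
Qed.

End Reachability.

End LMCDistance.

Theorem mainTheorem11 (R : realType) (S : countType) (L : finType)
  (tau : S -> S -> R) (supp : S -> seq S) (lab : S -> L)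
  (HM : is_lmc tau supp) (d : S * S -> R)
  (Hd : is_bisim_distance tau supp lab d) (s t : S) :
  d (s, t) < 1 ->
  exists T : S * S -> S * S -> R,
    policy tau supp lab T /\
    forall eps : R, 0 < eps ->
      exists u v : S, d (u, v) <= eps /\
        0 < reach_prob tau supp lab T [set (u, v)] (s, t).
Proof.
move=> dst; have [_ dfix _] := Hd.
pose T := optimal_policy HM d.
have TP : policy tau supp lab T by move=> p [_ hl]; exact: (optimal_policyP HM dfix hl).1.
exists T; split=> // eps eps0; apply: contrapT => no_close.
have far q : reachable tau supp lab T (s, t) q -> eps < d q.
  case: q => u v reach_uv; rewrite ltNge; apply/negP => duv.
  by apply: no_close; exists u, v; split=> //; exact: reachable_reach_prob.
have := bisim_distance_one_on_closed Hd eps0 (reachable_step TP (p := (s, t))) far.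
by move=> /(_ _ (reachable_refl tau supp lab T (s, t))) dst1; rewrite dst1 ltxx in dst.
Qed.
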